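(* Let $S$ be a Stone relation algebra satisfying the point axiom, i.e., the set $\mathrm{IP}(S)$ of ideal-points of $S$ is finite and non-empty and $\top=\bigsqcup\mathrm{IP}(S)$. Let $x\in S$. Then: 1. $1=\bigsqcup\{pp^{\smile}\mid p\in\mathrm{IP}(S)\}$. 2. $x=\bigsqcup\{pp^{\smile}xqq^{\smile}\mid p,q\in\mathrm{IP}(S)\}$. 3. For each atom $a\in S$ there is $p\in\mathrm{IP}(S)$ with $a\sqsubseteq p$. 4. Every point of $S$ is an ideal-point.
   Context: A Stone relation algebra is a structure $(S,\sqcup,\sqcap,\cdot,\overline{\,\cdot\,},{}^{\smile},\bot,\top,1)$ (write $xy$ for $x\cdot y$, $\overline{x}$ for the pseudocomplement, $x^{\smile}$ for the converse) such that: $(S,\sqcup,\sqcap,\bot,\top)$ is a bounded distributive lattice with order $x\sqsubseteq y\iff x\sqcup y=y$; $x\sqcap y=\bot\iff x\sqsubseteq\overline{y}$; $\overline{x}\sqcup\overline{\overline{x}}=\top$; $\cdot$ is associative with two-sided unit $1$, distributes over $\sqcup$ on both sides, and $\bot$ is a zero of $\cdot$; $x^{\smile\smile}=x$, $(xy)^{\smile}=y^{\smile}x^{\smile}$, $(x\sqcup y)^{\smile}=x^{\smile}\sqcup y^{\smile}$; $\overline{\overline{1}}=1$; $\overline{\overline{xy}}=\overline{\overline{x}}\,\overline{\overline{y}}$; $xy\sqcap z\sqsubseteq x(y\sqcap x^{\smile}z)$. $\bigsqcup P$ is the join of a finite non-empty set $P$. $x$ is injective if $xx^{\smile}\sqsubseteq1$,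 surjective if $1\sqsubseteq x^{\smile}x$, a vector if $x\top=x$, a covector if $\top x=x$, an ideal if it is a vector and a covector, and a point if it is an injective surjective vector. An ideal-point is a point $p$ such that for all points $q$ and all ideals $x\neq\bot$, $qx\sqsubseteq p$ implies $q\sqsubseteq p$. An atom is an element $x\neq\bot$ such that $\bot\neq y\sqsubseteq x$ implies $y=x$. *)

From Stdlib Require Import List.
Import ListNotations.

Record StoneRA := {
  carrier :> Type;
  sup : carrier -> carrier -> carrier;
  inf : carrier -> carrier -> carrier;
  comp : carrier -> carrier -> carrier;
  pc : carrier -> carrier;
  conv : carrier -> carrier;
  bot : carrier;
  top : carrier;
  one : carrier;
  sup_assoc : forall x y z, sup x (sup y z) = sup (sup x y) z;
  sup_comm : forall x y, sup x y = sup y x;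
  sup_idem : forall x, sup x x = x;
  inf_assoc : forall x y z, inf x (inf y z) = inf (inf x y) z;
  inf_comm : forall x y, inf x y = inf y x;
  inf_idem : forall x, inf x x = x;
  sup_absorb : forall x y, sup x (inf x y) = x;
  inf_absorb : forall x y, inf x (sup x y) = x;
  inf_sup_distr : forall x y z, inf x (sup y z) = sup (inf x y) (inf x z);
  sup_bot : forall x, sup bot x = x;
  inf_top : forall x, inf top x = x;
  (* pseudocomplement; order x ⊑ y iff x ⊔ y = y *)
  pc_spec : forall x y, inf x y = bot <-> sup x (pc y) = pc y;
  stone : forall x, sup (pc x) (pc (pc x)) = top;
  comp_assoc : forall x y z, comp x (comp y z) = comp (comp x y) z;
  comp_one_l : forall x, comp one x = x;
  comp_one_r : forall x, comp x one = x;
  comp_sup_l : forall x y z, comp (sup x y) z = sup (comp x z) (comp y z);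
  comp_sup_r : forall x y z, comp x (sup y z) = sup (comp x y) (comp x z);
  comp_bot_l : forall x, comp bot x = bot;
  comp_bot_r : forall x, comp x bot = bot;
  conv_invol : forall x, conv (conv x) = x;
  conv_comp : forall x y, conv (comp x y) = comp (conv y) (conv x);
  conv_sup : forall x y, conv (sup x y) = sup (conv x) (conv y);
  pc_pc_one : pc (pc one) = one;
  pc_pc_comp : forall x y, pc (pc (comp x y)) = comp (pc (pc x)) (pc (pc y));
  dedekind : forall x y z,
    sup (inf (comp x y) z) (comp x (inf y (comp (conv x) z)))
    = comp x (inf y (comp (conv x) z))
}.

Section Notions.
Variable S : StoneRA.

Definition le (x y : S) : Prop := sup S x y = y.

Definition injective (x : S) : Prop := le (comp S x (conv S x)) (one S).
Definition surjective (x : S) : Prop := le (one S) (comp S (conv S x) x).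
Definition vector (x : S) : Prop := comp S x (top S) = x.
Definition covector (x : S) : Prop := comp S (top S) x = x.
Definition ideal (x : S) : Prop := vector x /\ covector x.
Definition point (x : S) : Prop := injective x /\ surjective x /\ vector x.

Definition ideal_point (p : S) : Prop :=
  point p /\
  forall (q x : S), point q -> ideal x -> x <> bot S ->
    le (comp S q x) p -> le q p.

Definition atom (x : S) : Prop :=
  x <> bot S /\ forall y : S, y <> bot S -> le y x -> y = x.

(* join of a finite list of elements (bot for the empty list; used only on
   non-empty lists, where it is the join of the set of its elements) *)
Definition bigsup (l : list S) : S := fold_right (sup S) (bot S) l.

End Notions.

From Stdlib Require Import List Classical.
Import ListNotations.

(* Restricting [top = ⊔ IP(S)] to [1] gives [1 ⊑ ⊔ (1 ⊓ p) ⊑ ⊔ p p˘] by Dedekind,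
   and injectivity gives the converse; item 2 follows by composing [1 x 1].
   Every non-zero element meets some ideal-point; for an atom this meet is the
   atom itself.  A point [p] meeting the ideal-point [r] is mapped into [r] by
   the non-zero ideal [p˘ (p ⊓ r)], so [p ⊑ r], and comparable points are equal.
   A zero point only exists in the trivial algebra, where it is vacuously an
   ideal-point. *)

Section StoneRelationAlgebra.

Variable S : StoneRA.

Local Notation "x ⊑ y" := (le S x y) (at level 70).
Local Infix "⊔" := (sup S) (at level 50, left associativity).
Local Infix "⊓" := (inf S) (at level 40, left associativity).
Local Infix "·" := (comp S) (at level 35, right associativity).

Lemma le_refl (x : S) : x ⊑ x.
Proof. apply sup_idem. Qed.

Lemma le_trans (x y z : S) : x ⊑ y -> y ⊑ z -> x ⊑ z.
Proof. unfold le; intros Hxy Hyz. rewrite <- Hyz, sup_assoc, Hxy. reflexivity. Qed.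

Lemma le_antisym (x y : S) : x ⊑ y -> y ⊑ x -> x = y.
Proof. unfold le; intros Hxy Hyx. rewrite <- Hxy, <- Hyx at 1. apply sup_comm. Qed.

Lemma bot_le (x : S) : bot S ⊑ x.
Proof. apply sup_bot. Qed.

Lemma le_bot_eq (x : S) : x ⊑ bot S -> x = bot S.
Proof. intro H. apply le_antisym; [exact H | apply bot_le]. Qed.

Lemma le_supl (x y : S) : x ⊑ x ⊔ y.
Proof. unfold le. rewrite sup_assoc, sup_idem. reflexivity. Qed.

Lemma le_supr (x y : S) : y ⊑ x ⊔ y.
Proof. rewrite sup_comm. apply le_supl. Qed.

Lemma sup_lub (x y z : S) : x ⊑ z -> y ⊑ z -> x ⊔ y ⊑ z.
Proof. unfold le; intros Hx Hy. rewrite <- sup_assoc, Hy, Hx. reflexivity. Qed.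

Lemma le_iff_inf (x y : S) : x ⊑ y <-> x ⊓ y = x.
Proof.
  unfold le; split; intro H.
  - rewrite <- H. apply inf_absorb.
  - rewrite <- H, sup_comm, inf_comm. apply sup_absorb.
Qed.

Lemma inf_lel (x y : S) : x ⊓ y ⊑ x.
Proof. unfold le. rewrite sup_comm. apply sup_absorb. Qed.

Lemma inf_ler (x y : S) : x ⊓ y ⊑ y.
Proof. rewrite inf_comm. apply inf_lel. Qed.

Lemma inf_glb (x y z : S) : z ⊑ x -> z ⊑ y -> z ⊑ x ⊓ y.
Proof.
  rewrite !le_iff_inf. intros Hx Hy. rewrite inf_assoc, Hx, Hy. reflexivity.
Qed.

Lemma le_top (x : S) : x ⊑ top S.
Proof. apply le_iff_inf. rewrite inf_comm. apply inf_top. Qed.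

Lemma inf_topr (x : S) : x ⊓ top S = x.
Proof. apply le_iff_inf, le_top. Qed.

Lemma comp_monol (x y z : S) : x ⊑ y -> x · z ⊑ y · z.
Proof. unfold le; intro H. rewrite <- comp_sup_l, H. reflexivity. Qed.

Lemma comp_monor (x y z : S) : x ⊑ y -> z · x ⊑ z · y.
Proof. unfold le; intro H. rewrite <- comp_sup_r, H. reflexivity. Qed.

Lemma conv_mono (x y : S) : x ⊑ y -> conv S x ⊑ conv S y.
Proof. unfold le; intro H. rewrite <- conv_sup, H. reflexivity. Qed.

Lemma conv_top : conv S (top S) = top S.
Proof.
  apply le_antisym; [apply le_top |].
  rewrite <- (conv_invol S (top S)) at 1. apply conv_mono, le_top.
Qed.

Lemma bigsup_lub (l : list S) (z : S) :
  (forall y, In y l -> y ⊑ z) -> bigsup S l ⊑ z.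
Proof.
  induction l as [| y l IH]; simpl; intro H; [apply bot_le |].
  apply sup_lub; auto.
Qed.

Lemma bigsup_mono (A : Type) (f g : A -> S) (l : list A) :
  (forall a, In a l -> f a ⊑ g a) ->
  bigsup S (map f l) ⊑ bigsup S (map g l).
Proof.
  induction l as [| a l IH]; simpl; intro H; [apply le_refl |].
  apply sup_lub.
  - apply le_trans with (g a); [auto | apply le_supl].
  - apply le_trans with (bigsup S (map g l)); [auto | apply le_supr].
Qed.

Lemma bigsup_eq_bot (l : list S) :
  (forall y, In y l -> y = bot S) -> bigsup S l = bot S.
Proof.
  intro H. apply le_bot_eq, bigsup_lub. intros y Hy. rewrite (H y Hy). apply le_refl.
Qed.

Lemma inf_bigsupr (x : S) (l : list S) :
  x ⊓ bigsup S l = bigsup S (map (inf S x) l).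
Proof.
  induction l as [| y l IH]; simpl.
  - rewrite inf_comm. apply le_iff_inf, bot_le.
  - rewrite inf_sup_distr, IH. reflexivity.
Qed.

Lemma comp_bigsupl (A : Type) (f : A -> S) (l : list A) (x : S) :
  bigsup S (map f l) · x = bigsup S (map (fun a => f a · x) l).
Proof.
  induction l as [| a l IH]; simpl; [apply comp_bot_l |].
  rewrite comp_sup_l, IH. reflexivity.
Qed.

Lemma comp_bigsupr (A : Type) (f : A -> S) (l : list A) (x : S) :
  x · bigsup S (map f l) = bigsup S (map (fun a => x · f a) l).
Proof.
  induction l as [| a l IH]; simpl; [apply comp_bot_r |].
  rewrite comp_sup_r, IH. reflexivity.
Qed.

Lemma bigsup_app (l1 l2 : list S) :
  bigsup S (l1 ++ l2) = bigsup S l1 ⊔ bigsup S l2.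
Proof.
  induction l1 as [| y l1 IH]; simpl; [rewrite sup_bot; reflexivity |].
  rewrite IH, sup_assoc. reflexivity.
Qed.

Lemma bigsup_flat_map (A : Type) (g : A -> list S) (l : list A) :
  bigsup S (flat_map g l) = bigsup S (map (fun a => bigsup S (g a)) l).
Proof.
  induction l as [| a l IH]; simpl; [reflexivity |].
  rewrite bigsup_app, IH. reflexivity.
Qed.

Lemma vector_inf (v w : S) : vector S v -> vector S w -> vector S (v ⊓ w).
Proof.
  unfold vector; intros Hv Hw. apply le_antisym.
  - apply inf_glb.
    + rewrite <- Hv at 2. apply comp_monol, inf_lel.
    + rewrite <- Hw at 2. apply comp_monol, inf_ler.
  - rewrite <- (comp_one_r S (v ⊓ w)) at 1. apply comp_monor, le_top.
Qed.

Lemma inf_vector_le_comp_conv (v x : S) :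
  vector S v -> x ⊓ v ⊑ v · conv S v · x.
Proof.
  intro Hv. rewrite inf_comm, <- Hv at 1.
  eapply le_trans; [apply dedekind |].
  rewrite inf_top. apply le_refl.
Qed.

Lemma inf_one_le_comp_conv (v : S) : vector S v -> one S ⊓ v ⊑ v · conv S v.
Proof.
  intro Hv. rewrite <- (comp_one_r S (conv S v)). apply inf_vector_le_comp_conv, Hv.
Qed.

Lemma ideal_conv_comp (v w : S) : vector S v -> vector S w -> ideal S (conv S v · w).
Proof.
  unfold ideal, vector, covector; intros Hv Hw; split.
  - rewrite <- comp_assoc, Hw. reflexivity.
  - rewrite comp_assoc, <- conv_top, <- conv_comp, Hv. reflexivity.
Qed.

Lemma point_le_eq (p r : S) : point S p -> point S r -> p ⊑ r -> p = r.
Proof.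
  intros [_ [Hps _]] [Hri _] Hpr. apply le_antisym; [exact Hpr |].
  rewrite <- (comp_one_r S r).
  apply le_trans with (r · conv S p · p); [apply comp_monor, Hps |].
  apply le_trans with ((r · conv S r) · p).
  - rewrite comp_assoc. apply comp_monol, comp_monor, conv_mono, Hpr.
  - rewrite <- (comp_one_l S p) at 2. apply comp_monol, Hri.
Qed.

Lemma point_meet_ideal_point_eq (p r : S) :
  point S p -> ideal_point S r -> p ⊓ r <> bot S -> p = r.
Proof.
  intros Hp [Hr Hr_ideal] Hpr.
  pose proof Hp as [Hpi [_ Hpv]]. pose proof Hr as [_ [_ Hrv]].
  set (y := conv S p · (p ⊓ r)).
  assert (Hy : ideal S y) by exact (ideal_conv_comp p (p ⊓ r) Hpv (vector_inf p r Hpv Hrv)).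
  assert (Hpr_le : p ⊓ r ⊑ p · y).
  { apply le_trans with (p ⊓ r ⊓ p).
    - apply inf_glb; [apply le_refl | apply inf_lel].
    - apply inf_vector_le_comp_conv, Hpv. }
  assert (Hy_bot : y <> bot S).
  { intro Hy0. rewrite Hy0, comp_bot_r in Hpr_le. exact (Hpr (le_bot_eq _ Hpr_le)). }
  assert (Hpy : p · y ⊑ r).
  { unfold y. rewrite comp_assoc.
    apply le_trans with (one S · (p ⊓ r)); [apply comp_monol, Hpi |].
    rewrite comp_one_l. apply inf_ler. }
  apply point_le_eq; [exact Hp | exact Hr | exact (Hr_ideal p y Hp Hy Hy_bot Hpy)].
Qed.

Lemma surjective_bot_trivial (z : S) : surjective S (bot S) -> z = bot S.
Proof.
  unfold surjective. rewrite comp_bot_r. intro H1.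
  apply le_bot_eq in H1. rewrite <- (comp_one_r S z), H1. apply comp_bot_r.
Qed.

Section PointAxiom.

Variable ips : list S.
Hypothesis top_eq_bigsup : top S = bigsup S ips.

Lemma exists_inf_nonbot (x : S) : x <> bot S -> exists p, In p ips /\ x ⊓ p <> bot S.
Proof.
  intro Hx. apply NNPP. intro Hnone. apply Hx.
  rewrite <- (inf_topr x), top_eq_bigsup, inf_bigsupr.
  apply bigsup_eq_bot. intros y Hy. apply in_map_iff in Hy as [p [<- Hp]].
  apply NNPP. intro Hxp. apply Hnone. exists p. auto.
Qed.

Lemma atom_le_bigsup_elem (a : S) : atom S a -> exists p, In p ips /\ a ⊑ p.
Proof.
  intros [Ha Ha_min].
  destruct (exists_inf_nonbot a Ha) as [p [Hp Hap]].
  exists p. split; [exact Hp |].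
  apply le_iff_inf, Ha_min; [exact Hap | apply inf_lel].
Qed.

Lemma one_eq_bigsup_points :
  (forall p, In p ips -> point S p) ->
  one S = bigsup S (map (fun p => p · conv S p) ips).
Proof.
  intro Hpoints. apply le_antisym.
  - rewrite <- (inf_topr (one S)), top_eq_bigsup, inf_bigsupr.
    apply bigsup_mono. intros p Hp. apply inf_one_le_comp_conv, Hpoints, Hp.
  - apply bigsup_lub. intros y Hy. apply in_map_iff in Hy as [p [<- Hp]].
    apply Hpoints, Hp.
Qed.

Lemma point_is_ideal_point :
  (forall r, In r ips -> ideal_point S r) -> forall p, point S p -> ideal_point S p.
Proof.
  intros Hips p Hp.
  destruct (classic (p = bot S)) as [Hp0 | Hp0].
  - split; [exact Hp |]. intros q z _ _ Hz. exfalso. apply Hz.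
    apply surjective_bot_trivial. rewrite <- Hp0. apply Hp.
  - destruct (exists_inf_nonbot p Hp0) as [r [Hr Hpr]].
    rewrite (point_meet_ideal_point_eq p r Hp (Hips r Hr) Hpr). apply Hips, Hr.
Qed.

End PointAxiom.

Lemma decompose_by_bigsup_one (A : Type) (f : A -> S) (l : list A) (x : S) :
  one S = bigsup S (map f l) ->
  x = bigsup S (flat_map (fun a => map (fun b => f a · x · f b) l) l).
Proof.
  intro Hone. rewrite bigsup_flat_map.
  rewrite <- (comp_one_l S x) at 1. rewrite <- (comp_one_r S x) at 1.
  rewrite Hone at 1. rewrite comp_bigsupl.
  f_equal. apply map_ext. intro a.
  rewrite Hone, !comp_bigsupr. reflexivity.
Qed.

End StoneRelationAlgebra.

Theorem mainTheorem12 (S : StoneRA) (ips : list S)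
  (Hips : forall p : S, In p ips <-> ideal_point S p)
  (Hne : ips <> [])
  (Htop : top S = bigsup S ips)
  (x : S) :
  one S = bigsup S (map (fun p => comp S p (conv S p)) ips) /\
  x = bigsup S (flat_map (fun p =>
         map (fun q => comp S (comp S (comp S (comp S p (conv S p)) x) q) (conv S q))
             ips) ips) /\
  (forall a : S, atom S a -> exists p, In p ips /\ le S a p) /\
  (forall p : S, point S p -> ideal_point S p).
Proof.
  assert (Hone : one S = bigsup S (map (fun p => comp S p (conv S p)) ips)).
  { apply (one_eq_bigsup_points S ips Htop). intros p Hp. apply Hips, Hp. }
  split; [exact Hone |]. split.
  - rewrite (decompose_by_bigsup_one S _ _ _ x Hone) at 1.
    f_equal. apply flat_map_ext. intro p. apply map_ext. intro q.
    rewrite !comp_assoc. reflexivity.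
  - split.
    + exact (atom_le_bigsup_elem S ips Htop).
    + apply (point_is_ideal_point S ips Htop). intros r Hr. apply Hips, Hr.
Qed.
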